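(* For $n\ge1$ let $T_n$ be the number of domino tilings of $C_3\times P_{2n}$. For $n\ge0$ let $t_n$ be the number of domino tilings of the graph obtained from $C_3\times P_{2n+1}$ by deleting one vertex of the end copy $C_3\times\{1\}$. Then $$T_n=T_{n-1}+3t_{n-1}\ (n\ge2),\qquad t_n=T_n+t_{n-1}\ (n\ge1),$$ and $T_n=5T_{n-1}-T_{n-2}$ $(n\ge3)$, $t_n=5t_{n-1}-t_{n-2}$ $(n\ge2)$. Moreover, $$T_n=\frac1{14}\Big[(7+\sqrt{21})\Big(\tfrac{5+\sqrt{21}}2\Big)^n+(7-\sqrt{21})\Big(\tfrac{5-\sqrt{21}}2\Big)^n\Big]\quad(n\ge1),$$ $$t_n=\frac{1}{\sqrt{21}}\Big[\Big(\tfrac{5+\sqrt{21}}2\Big)^{n+1}-\Big(\tfrac{5-\sqrt{21}}2\Big)^{n+1}\Big]\quad(n\ge0).$$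
   Context: $H\times K$ denotes the Cartesian product of graphs. $P_m$ is the path with vertex set $\{1,\dots,m\}$ and $C_3$ is the triangle. A domino tiling of a finite graph is a perfect matching, and the number of domino tilings is the number of perfect matchings. *)

From mathcomp Require Import all_boot.
Set Implicit Arguments. Unset Strict Implicit. Unset Printing Implicit Defensive.

(* A simple graph on a finite type V given by a symmetric irreflexive relation e;
   U is the set of vertices kept (induced subgraph on U). *)
Definition perfect_matching (V : finType) (e : rel V) (U : {set V})
    (M : {set {set V}}) : bool :=
  [forall E in M, exists x, exists y,
      [&& x != y, e x y, x \in U, y \in U & E == [set x; y]]] &&
  [forall x in U, #|[set E in M | x \in E]| == 1].

(* number of domino tilings = number of perfect matchings *)
Definition num_tilings (V : finType) (e : rel V) (U : {set V}) : nat :=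
  #|[set M : {set {set V}} | perfect_matching e U M]|.

(* Cartesian product C_3 x P_m; vertices (a, i) with a : 'I_3 (triangle)
   and i : 'I_m (path vertex i+1 of P_m = {1..m}). *)
Definition prism_rel (m : nat) : rel ('I_3 * 'I_m) :=
  fun u v =>
    ((u.1 == v.1) && ((u.2.+1 == v.2 :> nat) || (v.2.+1 == u.2 :> nat)))
    || ((u.2 == v.2) && (u.1 != v.1)).

Definition T (n : nat) : nat := num_tilings (@prism_rel n.*2) [set: 'I_3 * 'I_n.*2].

Definition t (n : nat) : nat :=
  num_tilings (@prism_rel n.*2.+1) ([set: 'I_3 * 'I_n.*2.+1] :\ (ord0, ord0)).

(* Expand a tiling along the tile covering a corner vertex: every branch is forced
   after at most two more tiles and leaves a translate of C_3 x P_{2n-2} or of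
   C_3 x P_{2n-1} with a corner removed (up to a symmetry of the triangle): the corner
   of C_3 x P_{2n} gives T_n = T_{n-1} + 3 t_{n-1}, and the neighbour of the missing
   corner of the notched prism gives t_n = T_n + t_{n-1}.  Eliminating either sequence
   yields x_{n+2} = 5 x_{n+1} - x_n, whose characteristic roots are (5 +- sqrt 21)/2,
   and the closed forms follow from T_0 = t_0 = 1 (so T_1 = 4, t_1 = 5). *)

From mathcomp Require Import all_boot zify.
From Stdlib Require Import Reals Lra.
Set Implicit Arguments. Unset Strict Implicit. Unset Printing Implicit Defensive.

Section PerfectMatching.
Variables (V : finType) (e : rel V).

Definition edges_within (U : {set V}) (M : {set {set V}}) :=
  forall E, E \in M -> exists x y, [/\ x != y, e x y, x \in U, y \in U & E = [set x; y]].

Definition covers (U : {set V}) (M : {set {set V}}) :=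
  forall x, x \in U -> exists2 E, E \in M & x \in E.

Definition blocks_disjoint (U : {set V}) (M : {set {set V}}) :=
  forall x E1 E2, x \in U -> E1 \in M -> E2 \in M -> x \in E1 -> x \in E2 -> E1 = E2.

Lemma perfect_matchingP U M :
  perfect_matching e U M <-> [/\ edges_within U M, covers U M & blocks_disjoint U M].
Proof.
rewrite /perfect_matching; split.
- case/andP => /forall_inP Medges /forall_inP Mcard; split.
  + move=> E /Medges /existsP[x /existsP[y /and5P[? ? ? ? /eqP ?]]]; by exists x, y.
  + move=> x /Mcard /cards1P[E0 ME0].
    have : E0 \in [set E in M | x \in E] by rewrite ME0 set11.
    by rewrite inE => /andP[]; exists E0.
  + move=> x E1 E2 xU E1M E2M xE1 xE2; have /cards1P[E0 ME0] := Mcard x xU.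
    have : E1 \in [set E in M | x \in E] by rewrite inE E1M.
    have : E2 \in [set E in M | x \in E] by rewrite inE E2M.
    by rewrite ME0 !inE => /eqP-> /eqP->.
- case=> Medges Mcov Mdisj; apply/andP; split.
  + apply/forall_inP => E /Medges [x [y [? ? ? ? ->]]].
    by apply/existsP; exists x; apply/existsP; exists y; rewrite eqxx; apply/and5P.
  + apply/forall_inP => x xU; have [E0 E0M xE0] := Mcov x xU.
    apply/cards1P; exists E0; apply/setP => E; rewrite !inE.
    by apply/andP/eqP => [[EM xE]|->]; [exact: Mdisj xU EM E0M xE xE0 | ].
Qed.

Lemma edges_within_mem U M E z : edges_within U M -> E \in M -> z \in E -> z \in U.
Proof. by move=> Medges /Medges [x [y [_ _ xU yU ->]]]; rewrite !inE => /orP[] /eqP->. Qed.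

Lemma num_tilings_set0 : num_tilings e set0 = 1.
Proof.
apply/eqP/cards1P; exists set0; apply/setP => M; rewrite !inE.
apply/idP/eqP => [/perfect_matchingP[Medges _ _]|->].
- by apply/setP => E; rewrite inE; apply/negP => /Medges [x [y [_ _]]]; rewrite inE.
- by apply/perfect_matchingP; split => [E|x|x]; rewrite inE.
Qed.

End PerfectMatching.

Section Transport.
Variables (V W : finType) (e : rel V) (e' : rel W) (f : V -> W) (U : {set V}).
Hypothesis f_inj : injective f.
Hypothesis f_edge : {in U &, forall u v, e' (f u) (f v) = e u v}.

Lemma preimset_pair x y : f @^-1: [set f x; f y] = [set x; y].
Proof. by apply/setP => z; rewrite !inE !(inj_eq f_inj). Qed.

Lemma imset_pair x y : f @: [set x; y] = [set f x; f y].
Proof. by rewrite imsetU1 imset_set1. Qed.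

Lemma perfect_matching_imset M : perfect_matching e U M ->
  perfect_matching e' (f @: U) [set f @: (E : {set V}) | E in M].
Proof.
case/perfect_matchingP => Medges Mcov Mdisj; apply/perfect_matchingP; split.
- move=> _ /imsetP[E EM ->]; have [x [y [xy exy xU yU ->]]] := Medges _ EM.
  by exists (f x), (f y); rewrite (inj_eq f_inj) f_edge ?imset_f ?imset_pair.
- move=> _ /imsetP[x xU ->]; have [E EM xE] := Mcov x xU.
  by exists (f @: E); rewrite ?imset_f.
- move=> _ _ _ /imsetP[x xU ->] /imsetP[E1 E1M ->] /imsetP[E2 E2M ->].
  by rewrite !mem_imset // => xE1 xE2; rewrite (Mdisj x E1 E2).
Qed.

Lemma perfect_matching_preimset M' : perfect_matching e' (f @: U) M' ->
  perfect_matching e U [set f @^-1: (E' : {set W}) | E' in M'].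
Proof.
case/perfect_matchingP => Medges Mcov Mdisj; apply/perfect_matchingP; split.
- move=> _ /imsetP[E' E'M ->].
  have [u [v [uv euv /imsetP[x xU ux] /imsetP[y yU vy] ->]]] := Medges _ E'M.
  subst u v; exists x, y; split; rewrite ?preimset_pair //.
  + by rewrite -(inj_eq f_inj).
  + by rewrite -f_edge.
- move=> x xU; have [E' E'M xE'] := Mcov (f x) (imset_f _ xU).
  by exists (f @^-1: E'); rewrite ?imset_f ?inE.
- move=> x _ _ xU /imsetP[E1' E1M ->] /imsetP[E2' E2M ->]; rewrite !inE => xE1 xE2.
  by rewrite (Mdisj (f x) E1' E2') ?imset_f.
Qed.

Lemma num_tilings_imset : num_tilings e U = num_tilings e' (f @: U).
Proof.
have image_inj : injective (fun M : {set {set V}} => [set f @: (E : {set V}) | E in M]).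
  by apply: imset_inj; apply: imset_inj.
rewrite /num_tilings -(card_imset _ image_inj); apply: eq_card => M'.
rewrite [in RHS]inE; apply/imsetP/idP => [[M]|M'pm].
  by rewrite inE => /perfect_matching_imset Mpm ->.
exists [set f @^-1: (E' : {set W}) | E' in M']; first by rewrite inE perfect_matching_preimset.
case/perfect_matchingP: M'pm => Medges _ _.
rewrite -imset_comp -[LHS]imset_id; apply: eq_in_imset => E' /Medges.
case=> _ [_ [_ _ /imsetP[x _ ->] /imsetP[y _ ->] ->]].
by rewrite /= preimset_pair imset_pair.
Qed.

End Transport.

Section Expansion.
Variables (V : finType) (e : rel V) (U : {set V}) (x y : V).
Hypothesis e_irr : irreflexive e.
Hypotheses (xU : x \in U) (yU : y \in U) (exy : e x y).

Let xy : x != y.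
Proof. by apply: contraTneq exy => ->; rewrite e_irr. Qed.

Lemma perfect_matching_setD_edge M : perfect_matching e U M -> [set x; y] \in M ->
  perfect_matching e (U :\ x :\ y) (M :\ [set x; y]).
Proof.
case/perfect_matchingP => Medges Mcov Mdisj xyM; apply/perfect_matchingP; split.
- move=> E; rewrite !inE => /andP[Exy EM].
  have [a [b [ab eab aU bU EE]]] := Medges _ EM.
  have outside z : z \in E -> (z != y) && (z != x).
    move=> zE; apply/andP; split; apply: contraNneq Exy => zxy; subst z; apply/eqP.
    + by apply: (Mdisj y) => //; rewrite !inE eqxx orbT.
    + by apply: (Mdisj x) => //; rewrite !inE eqxx.
  exists a, b; split; rewrite // !inE ?aU ?bU andbT.
  + by apply: outside; rewrite EE !inE eqxx.
  + by apply: outside; rewrite EE !inE eqxx orbT.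
- move=> z; rewrite !inE => /and3P[zy zx zU]; have [E EM zE] := Mcov z zU.
  exists E => //; rewrite !inE EM andbT; apply: contraNneq zx => Exy.
  by move: zE; rewrite Exy !inE (negbTE zy) orbF.
- move=> z E1 E2; rewrite !inE => /and3P[_ _ zU] /andP[_ E1M] /andP[_ E2M].
  exact: Mdisj.
Qed.

Lemma perfect_matching_setU_edge M' : perfect_matching e (U :\ x :\ y) M' ->
  perfect_matching e U ([set x; y] |: M').
Proof.
case/perfect_matchingP => Medges Mcov Mdisj.
have M'U E z : E \in M' -> z \in E -> [&& z != y, z != x & z \in U].
  by move=> EM zE; have := edges_within_mem Medges EM zE; rewrite !inE.
have xyE E z : E \in M' -> z \in E -> z \in [set x; y] -> False.
  by move=> EM /(M'U E z EM); rewrite !inE => /and3P[/negPf-> /negPf-> _].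
apply/perfect_matchingP; split.
- move=> E; rewrite !inE => /orP[/eqP->|EM]; first by exists x, y.
  have [a [b [ab eab aU bU ->]]] := Medges _ EM.
  by exists a, b; move: aU bU; rewrite !inE => /and3P[_ _ aU] /and3P[_ _ bU].
- move=> z zU; have [zxy|zxy] := boolP (z \in [set x; y]).
    by exists [set x; y]; rewrite ?setU11.
  have [E EM zE] : exists2 E, E \in M' & z \in E.
    by apply: Mcov; move: zxy; rewrite !inE negb_or zU => /andP[-> ->].
  by exists E; rewrite // inE EM orbT.
- move=> z E1 E2 zU; rewrite !inE => /orP[/eqP->|E1M] /orP[/eqP->|E2M] //.
  + by move=> zxy zE2; case: (xyE _ _ E2M zE2 zxy).
  + by move=> zE1 zxy; case: (xyE _ _ E1M zE1 zxy).
  + by move=> zE1 zE2; apply: (Mdisj z) => //; have := M'U _ _ E1M zE1; rewrite !inE.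
Qed.

Lemma card_perfect_matchings_with_edge :
  #|[set M | perfect_matching e U M & [set x; y] \in M]| = num_tilings e (U :\ x :\ y).
Proof.
set A := [set M | _ & _].
have del_inj : {in A &, injective (fun M => M :\ [set x; y])}.
  move=> M1 M2; rewrite !inE => /andP[_ xyM1] /andP[_ xyM2] /= M12.
  by rewrite -(setD1K xyM1) -(setD1K xyM2) M12.
rewrite -(card_in_imset del_inj); apply: eq_card => M'; rewrite [in RHS]inE.
apply/imsetP/idP => [[M]|M'pm].
  by rewrite inE => /andP[Mpm xyM] ->; apply: perfect_matching_setD_edge.
have xyM' : [set x; y] \notin M'.
  case/perfect_matchingP: M'pm => Medges _ _; apply/negP => xyM'.
  by have := edges_within_mem Medges xyM' (setU11 x [set y]); rewrite !inE eqxx andbF.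
exists ([set x; y] |: M'); last by rewrite setU1K.
by rewrite inE setU11 andbT perfect_matching_setU_edge.
Qed.

End Expansion.

Section ExpandVertex.
Variables (V : finType) (e : rel V).
Hypothesis e_sym : symmetric e.
Hypothesis e_irr : irreflexive e.

Lemma perfect_matching_partner (U : {set V}) M x : perfect_matching e U M -> x \in U ->
  #|[set y in U | e x y & [set x; y] \in M]| = 1.
Proof.
case/perfect_matchingP => Medges Mcov Mdisj xU.
have [E EM xE] := Mcov x xU; have [a [b [ab eab aU bU EE]]] := Medges _ EM.
have [y [yU exy Exy]] : exists y, [/\ y \in U, e x y & E = [set x; y]].
  move: xE; rewrite EE !inE => /orP[] /eqP xab; subst; first by exists b.
  by exists a; rewrite e_sym setUC.
rewrite {}Exy in EM.
apply/eqP/cards1P; exists y; apply/setP => z; rewrite !inE.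
apply/and3P/eqP => [[zU exz xzM]|->]; last by split.
have : z \in [set x; y] by rewrite -(Mdisj x _ _ xU xzM EM) ?setU11 // !inE eqxx orbT.
rewrite !inE => /orP[] /eqP // zx; by rewrite zx e_irr in exz.
Qed.

Lemma num_tilings_expand (U : {set V}) x : x \in U ->
  num_tilings e U = \sum_(y in [set y in U | e x y]) num_tilings e (U :\ x :\ y).
Proof.
move=> xU; set N := [set y in U | e x y].
transitivity (\sum_(M | perfect_matching e U M) \sum_(y in N | [set x; y] \in M) 1).
  rewrite /num_tilings -sum1_card big_mkcond [RHS]big_mkcond; apply: eq_bigr => M _ /=.
  rewrite inE; case: ifP => // Mpm; rewrite sum1dep_card -(perfect_matching_partner Mpm xU).
  by apply: eq_card => y; rewrite !inE andbA.
rewrite (exchange_big_dep (fun y => y \in N)) /= => [|M y _ /andP[]//].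
apply: eq_bigr => y; rewrite inE => /andP[yU exy].
rewrite -card_perfect_matchings_with_edge // -sum1_card.
by apply: eq_bigl => M; rewrite !inE yU exy.
Qed.

End ExpandVertex.

Definition prism_adj (a i b j : nat) : bool :=
  (a == b) && ((i.+1 == j) || (j.+1 == i)) || (i == j) && (a != b).

Lemma prism_relE m (u v : 'I_3 * 'I_m) : prism_rel u v = prism_adj u.1 u.2 v.1 v.2.
Proof. by []. Qed.

Lemma prism_rel_sym m : symmetric (@prism_rel m).
Proof. by move=> u v; rewrite !prism_relE /prism_adj; lia. Qed.

Lemma prism_rel_irr m : irreflexive (@prism_rel m).
Proof. by move=> u; rewrite prism_relE /prism_adj; lia. Qed.

(* Nodes are addressed by their natural-number coordinates (triangle vertex, layer),
   so that regions and their translates are compared by [lia]. *)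
Definition prism_region m (P : nat -> nat -> bool) : {set 'I_3 * 'I_m} :=
  [set v : 'I_3 * 'I_m | P v.1 v.2].

Definition prism_tilings m P := num_tilings (@prism_rel m) (prism_region m P).

Definition punch (P : nat -> nat -> bool) a i : nat -> nat -> bool :=
  fun b j => P b j && ((b, j) != (a, i)).

Definition whole : nat -> nat -> bool := fun _ _ => true.
Definition notched : nat -> nat -> bool := fun b j => (b, j) != (0, 0).

Lemma prism_tilings_ext m P Q : (forall b j, b < 3 -> j < m -> P b j = Q b j) ->
  prism_tilings m P = prism_tilings m Q.
Proof.
by move=> PQ; congr num_tilings; apply/setP => -[b j]; rewrite !inE /= PQ.
Qed.

Lemma sum_prism_nodes m (A : {set 'I_3 * 'I_m}) (s : seq (nat * nat)) (F : nat * nat -> nat) :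
  uniq s -> all (fun w => (w.1 < 3) && (w.2 < m)) s ->
  (forall v : 'I_3 * 'I_m, (v \in A) = ((v.1 : nat, v.2 : nat) \in s)) ->
  \sum_(v in A) F (v.1 : nat, v.2 : nat) = \sum_(w <- s) F w.
Proof.
move=> s_uniq /allP s_range As.
pose coord (v : 'I_3 * 'I_m) := (v.1 : nat, v.2 : nat).
have coord_inj : injective coord.
  by move=> [b j] [c l] [/val_inj-> /val_inj->].
rewrite -big_enum -(big_map coord predT); apply: perm_big; apply: uniq_perm => //.
  by rewrite map_inj_uniq ?enum_uniq.
move=> [b j]; apply/mapP/idP => [[v] | ws]; first by rewrite mem_enum As => ? ->.
have /andP[b3 jm] := s_range _ ws.
by exists (Ordinal b3, Ordinal jm); rewrite ?mem_enum ?As.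
Qed.

Lemma prism_tilings_expand m (P : nat -> nat -> bool) a i (s : seq (nat * nat)) :
  a < 3 -> i < m -> P a i -> uniq s -> all (fun w => (w.1 < 3) && (w.2 < m)) s ->
  (forall b j, b < 3 -> j < m -> P b j && prism_adj a i b j = ((b, j) \in s)) ->
  prism_tilings m P = \sum_(w <- s) prism_tilings m (punch (punch P a i) w.1 w.2).
Proof.
move=> a3 im Pai s_uniq s_range nbrs; set x : 'I_3 * 'I_m := (Ordinal a3, Ordinal im).
rewrite /prism_tilings (num_tilings_expand (@prism_rel_sym m) (@prism_rel_irr m) (x := x));
  last by rewrite inE.
rewrite -(sum_prism_nodes (A := [set y in prism_region m P | prism_rel x y])
            (fun w => prism_tilings m (punch (punch P a i) w.1 w.2)) s_uniq s_range).
  apply: eq_bigr => y _; congr num_tilings; apply/setP => v; rewrite !inE /=.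
  case: v y => [b j] [c l]; rewrite /punch /= !xpair_eqE -!(inj_eq val_inj) /=; lia.
by move=> [b j]; rewrite !inE /= -nbrs.
Qed.

(* The transposition of triangle vertices [0] and [c]; it carries a region missing
   the corner [(c, s)] to a translate of [notched]. *)
Definition swap0 (c b : nat) : nat := if b == 0 then c else if b == c then 0 else b.

Lemma swap0_lt c b : c < 3 -> b < 3 -> swap0 c b < 3.
Proof. by rewrite /swap0; case: ifP => // _; case: ifP. Qed.

Lemma swap0K c b : c < 3 -> b < 3 -> swap0 c (swap0 c b) = b.
Proof. by move: c b => [|[|[|c]]] [|[|[|b]]]. Qed.

Lemma swap0_eq c a b : c < 3 -> a < 3 -> b < 3 -> (swap0 c a == swap0 c b) = (a == b).
Proof. by move: c a b => [|[|[|c]]] [|[|[|a]]] [|[|[|b]]]. Qed.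

Lemma swap0_eq0 c b : c < 3 -> b < 3 -> (swap0 c b == 0) = (b == c).
Proof. by move: c b => [|[|[|c]]] [|[|[|b]]]. Qed.

Lemma prism_tilings_shift m m' s c (P : nat -> nat -> bool) : s + m = m' -> c < 3 ->
  prism_tilings m P = prism_tilings m' (fun b j => (s <= j) && P (swap0 c b) (j - s)).
Proof.
move=> mm' c3.
have shift_lt (j : 'I_m) : s + j < m' by rewrite -mm' ltn_add2l.
pose f (v : 'I_3 * 'I_m) : 'I_3 * 'I_m' :=
  (Ordinal (swap0_lt c3 (ltn_ord v.1)), Ordinal (shift_lt v.2)).
have f_inj : injective f.
  by move=> [a i] [b j] [/eqP]; rewrite swap0_eq // => /eqP/val_inj-> /addnI/val_inj->.
rewrite /prism_tilings (num_tilings_imset (e' := @prism_rel m') f_inj).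
  congr num_tilings; apply/setP => -[b j]; rewrite inE /=; apply/imsetP/idP.
  - case=> -[a i]; rewrite inE /= => Pai [-> ->] /=.
    by rewrite swap0K // leq_addr addKn.
  - case/andP => sj Pj.
    have jm : j - s < m by have := ltn_ord j; lia.
    exists (Ordinal (swap0_lt c3 (ltn_ord b)), Ordinal jm); first by rewrite inE.
    by congr pair; apply: val_inj; rewrite /= ?swap0K ?subnKC.
by move=> [a i] [b j] _ _; rewrite !prism_relE /prism_adj /= swap0_eq //; lia.
Qed.

Ltac neighbours :=
  move=> ? ? ? ?; rewrite /punch /whole /notched /prism_adj /= !inE !xpair_eqE; lia.

Ltac same_region :=
  apply: prism_tilings_ext => ? ? ? ?;
  rewrite /punch /whole /notched /= !xpair_eqE ?swap0_eq0 //; lia.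

Lemma prism_whole_step k : prism_tilings k.*2.+2 whole =
  prism_tilings k.*2 whole + 3 * prism_tilings k.*2.+1 notched.
Proof.
have cut10 : prism_tilings k.*2.+2 (punch (punch whole 0 0) 1 0) =
    prism_tilings k.*2.+1 notched.
  rewrite (@prism_tilings_expand _ _ 2 0 [:: (2, 1)]) //; last by neighbours.
  by rewrite big_seq1 [RHS](@prism_tilings_shift _ k.*2.+2 1 2) //; same_region.
have cut20 : prism_tilings k.*2.+2 (punch (punch whole 0 0) 2 0) =
    prism_tilings k.*2.+1 notched.
  rewrite (@prism_tilings_expand _ _ 1 0 [:: (1, 1)]) //; last by neighbours.
  by rewrite big_seq1 [RHS](@prism_tilings_shift _ k.*2.+2 1 1) //; same_region.
have cut01 : prism_tilings k.*2.+2 (punch (punch whole 0 0) 0 1) =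
    prism_tilings k.*2.+1 notched + prism_tilings k.*2 whole.
  rewrite (@prism_tilings_expand _ _ 1 0 [:: (2, 0); (1, 1)]) //; last by neighbours.
  rewrite !big_cons big_nil addn0 /= [in RHS](@prism_tilings_shift _ k.*2.+2 1 0) //.
  congr (_ + _); first by same_region.
  rewrite (@prism_tilings_expand _ _ 2 0 [:: (2, 1)]) //; last by neighbours.
  by rewrite big_seq1 [RHS](@prism_tilings_shift _ k.*2.+2 2 0) //; same_region.
rewrite (@prism_tilings_expand _ _ 0 0 [:: (1, 0); (2, 0); (0, 1)]) //; last by neighbours.
by rewrite !big_cons big_nil addn0 /= cut10 cut20 cut01; lia.
Qed.

Lemma prism_notched_step k : prism_tilings k.*2.+3 notched =
  prism_tilings k.*2.+2 whole + prism_tilings k.*2.+1 notched.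
Proof.
rewrite (@prism_tilings_expand _ _ 1 0 [:: (2, 0); (1, 1)]) //; last by neighbours.
rewrite !big_cons big_nil addn0 /= [in RHS](@prism_tilings_shift _ k.*2.+3 1 0) //.
congr (_ + _); first by same_region.
rewrite (@prism_tilings_expand _ _ 2 0 [:: (2, 1)]) //; last by neighbours.
rewrite big_seq1 (@prism_tilings_expand _ _ 0 1 [:: (0, 2)]) //; last by neighbours.
by rewrite big_seq1 [RHS](@prism_tilings_shift _ k.*2.+3 2 0) //; same_region.
Qed.

Lemma prism_tilings_empty m P : (forall b j, b < 3 -> j < m -> P b j = false) ->
  prism_tilings m P = 1.
Proof.
move=> P0; rewrite /prism_tilings.
have -> : prism_region m P = set0 by apply/setP => -[b j]; rewrite !inE /= P0.
exact: num_tilings_set0.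
Qed.

Lemma prism_whole0 : prism_tilings 0 whole = 1.
Proof. by apply: prism_tilings_empty. Qed.

Lemma prism_notched0 : prism_tilings 1 notched = 1.
Proof.
rewrite (@prism_tilings_expand _ _ 1 0 [:: (2, 0)]) //; last by neighbours.
rewrite big_seq1 prism_tilings_empty // => b j.
by rewrite /punch /notched /= !xpair_eqE; lia.
Qed.

Lemma T_prism n : T n = prism_tilings n.*2 whole.
Proof. by congr num_tilings; apply/setP => v; rewrite !inE. Qed.

Lemma t_prism n : t n = prism_tilings n.*2.+1 notched.
Proof.
congr num_tilings; apply/setP => -[b j]; rewrite !inE /= andbT.
by rewrite /notched !xpair_eqE.
Qed.

Lemma T_succ n : T n.+1 = T n + 3 * t n.
Proof. by rewrite !T_prism t_prism doubleS prism_whole_step. Qed.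

Lemma t_succ n : t n.+1 = T n.+1 + t n.
Proof. by rewrite !T_prism !t_prism doubleS prism_notched_step. Qed.

Lemma T0 : T 0 = 1.
Proof. by rewrite T_prism prism_whole0. Qed.

Lemma t0 : t 0 = 1.
Proof. by rewrite t_prism prism_notched0. Qed.

Section CoupledRecurrence.
Variables u v : nat -> nat.
Hypothesis u_succ : forall n, u n.+1 = u n + 3 * v n.
Hypothesis v_succ : forall n, v n.+1 = u n.+1 + v n.

Lemma coupled_rec2_fst n : u n.+2 + u n = 5 * u n.+1.
Proof. by have := u_succ n.+1; have := v_succ n; have := u_succ n; lia. Qed.

Lemma coupled_rec2_snd n : v n.+2 + v n = 5 * v n.+1.
Proof. by have := v_succ n.+1; have := u_succ n.+1; have := v_succ n; lia. Qed.

End CoupledRecurrence.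

Lemma INR_rec2 (a : nat) (u : nat -> nat) : (forall n, u n.+2 + u n = a * u n.+1) ->
  forall n, INR (u n.+2) = (INR a * INR (u n.+1) - INR (u n))%R.
Proof. by move=> urec n; have := f_equal INR (urec n); rewrite plus_INR mult_INR; lra. Qed.

Open Scope R_scope.

Lemma rec2_ext (a : R) (f g : nat -> R) :
  (forall n, f n.+2 = a * f n.+1 - f n) -> (forall n, g n.+2 = a * g n.+1 - g n) ->
  f 0%nat = g 0%nat -> f 1%nat = g 1%nat -> forall n, f n = g n.
Proof.
move=> frec grec fg0 fg1.
suff fg n : f n = g n /\ f n.+1 = g n.+1 by move=> n; case: (fg n).
elim: n => [|n [fgn fgn1]]; first by [].
by split; rewrite // frec grec fgn fgn1.
Qed.

Lemma pow_rec2 (a x : R) : x * x = a * x - 1 -> forall n, x ^ n.+2 = a * x ^ n.+1 - x ^ n.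
Proof. by move=> xroot n; rewrite /= -(Rmult_assoc x x) xroot; ring. Qed.

Section ClosedForms.

Let s := sqrt 21.
Let phi := (5 + s) / 2.
Let psi := (5 - s) / 2.

Let s_sq : s * s = 21.
Proof. by apply: sqrt_sqrt; lra. Qed.

Let s_pos : 0 < s.
Proof. by apply: sqrt_lt_R0; lra. Qed.

Let phi_root : phi * phi = 5 * phi - 1.
Proof. by rewrite /phi; nra. Qed.

Let psi_root : psi * psi = 5 * psi - 1.
Proof. by rewrite /psi; nra. Qed.

Lemma T_closed_form n : INR (T n) = / 14 * ((7 + s) * phi ^ n + (7 - s) * psi ^ n).
Proof.
move: n; apply: (rec2_ext (a := 5)) => [n|n||].
- by rewrite (INR_rec2 (coupled_rec2_fst T_succ t_succ)) /=; lra.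
- by rewrite !(pow_rec2 phi_root) !(pow_rec2 psi_root); ring.
- by rewrite T0 /=; field.
- by rewrite T_succ T0 t0 /phi /psi /=; nra.
Qed.

Lemma t_closed_form n : INR (t n) = / s * (phi ^ n.+1 - psi ^ n.+1).
Proof.
move: n; apply: (rec2_ext (a := 5)) => [n|n||].
- by rewrite (INR_rec2 (coupled_rec2_snd T_succ t_succ)) /=; lra.
- by rewrite !(pow_rec2 phi_root) !(pow_rec2 psi_root); ring.
- by rewrite t0 /phi /psi /=; field; lra.
- by rewrite t_succ T_succ T0 t0 /phi /psi /=; field; nra.
Qed.

End ClosedForms.

Close Scope R_scope.

Theorem theorem8 :
  (forall n : nat, 2 <= n -> T n = T n.-1 + 3 * t n.-1) /\
  (forall n : nat, 1 <= n -> t n = T n + t n.-1) /\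
  (forall n : nat, 3 <= n -> T n + T n.-2 = 5 * T n.-1) /\
  (forall n : nat, 2 <= n -> t n + t n.-2 = 5 * t n.-1) /\
  (forall n : nat, 1 <= n ->
     INR (T n) =
     (/ 14 * ((7 + sqrt 21) * ((5 + sqrt 21) / 2) ^ n
            + (7 - sqrt 21) * ((5 - sqrt 21) / 2) ^ n))%R) /\
  (forall n : nat,
     INR (t n) =
     (/ sqrt 21 * (((5 + sqrt 21) / 2) ^ n.+1 - ((5 - sqrt 21) / 2) ^ n.+1))%R).
Proof.
split; first by move=> [|n] // _; exact: T_succ.
split; first by move=> [|n] // _; exact: t_succ.
split; first by move=> [|[|n]] // _; exact: (coupled_rec2_fst T_succ t_succ n).
split; first by move=> [|[|n]] // _; exact: (coupled_rec2_snd T_succ t_succ n).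
split; first by move=> n _; exact: T_closed_form.
exact: t_closed_form.
Qed.
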